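(* Let $m,n$ be positive integers with $m \neq n$ and $\gcd(m,n) > 1$. Then $K_m \otimes K_n$ is not a circulant graph.
   Context: Graphs have no multiple edges but may have loops. The tensor product $G \otimes H$ of graphs $G$ and $H$ has vertex set $V(G)\times V(H)$, with $(g,h)$ adjacent to $(g',h')$ if and only if $g$ is adjacent to $g'$ in $G$ and $h$ is adjacent to $h'$ in $H$. For an integer $n\ge 1$ and a set $S$ of integers, the circulant graph $C_nS$ has vertex set $\{0,1,\dots,n-1\}$, with $i$ adjacent to $j$ if and only if $i-j \equiv \pm s \pmod n$ for some $s\in S$. A graph is circulant if it is isomorphic to some $C_nS$; equivalently, if its automorphism group contains a cyclic subgroup acting transitively on the vertices. $K_n$ denotes the complete graph on $n$ vertices (no loops). *)

From mathcomp Require Import all_boot all_order all_algebra.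
Set Implicit Arguments. Unset Strict Implicit. Unset Printing Implicit Defensive.
Import GRing.Theory Num.Theory.

(* A graph (no multiple edges, loops allowed) on a finite vertex type:
   a symmetric adjacency relation (in Prop). *)

Definition complete_adj (n : nat) (i j : 'I_n) : Prop := i <> j.

Definition tensor_adj (U V : Type) (eG : U -> U -> Prop) (eH : V -> V -> Prop)
  (x y : U * V) : Prop := eG x.1 y.1 /\ eH x.2 y.2.

Definition circulant_adj (n : nat) (S : int -> Prop) (i j : 'I_n) : Prop :=
  exists s : int, S s /\
    ((((i%:Z - j%:Z) - s) %% n%:Z)%Z = 0 \/ (((i%:Z - j%:Z) + s) %% n%:Z)%Z = 0).

Definition is_circulant (V : finType) (e : V -> V -> Prop) : Prop :=
  exists (n : nat) (S : int -> Prop) (f : 'I_n -> V),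
    bijective f /\ forall i j : 'I_n, circulant_adj S i j <-> e (f i) (f j).

From mathcomp Require Import all_boot all_order all_algebra.
From mathcomp Require Import zify.
Import GRing.Theory.
Set Implicit Arguments. Unset Strict Implicit. Unset Printing Implicit Defensive.

(* Two distinct non-adjacent vertices of K_m (x) K_n lie in a common row or a
   common column, and then have exactly n resp. m common non-neighbours (the
   vertices themselves included).  As m <> n, every automorphism maps rows to
   rows and columns to columns, hence acts as a pair of permutations (al, be)
   of the two factors, and all its orbits have length at most
   lcm(order al, order be) < mn, since gcd(m, n) > 1.  A circulant structure
   would instead make the rotation i |-> i + 1 of Z_mn an automorphism with an
   orbit of length mn. *)

Lemma iter_order_dvdn (T : finType) (f : T -> T) x k :
  injective f -> order f x %| k -> iter k f x = x.
Proof.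
move=> f_inj /dvdnP[c ->]; elim: c => [//|c IHc].
by rewrite mulSn iterD IHc iter_order.
Qed.

Lemma lcmn_lt_muln p q m n :
  0 < p -> 0 < q -> p <= m -> q <= n -> 1 < gcdn m n -> lcmn p q < m * n.
Proof.
move=> p_gt0 q_gt0 le_pm le_qn gcd_gt1.
have le_lcm_pq : lcmn p q <= p * q.
  by rewrite dvdn_leq ?muln_gt0 ?p_gt0 // dvdn_lcm dvdn_mulr ?dvdn_mull.
have [eq_pq | lt_pq] := eqVneq (p * q) (m * n); last first.
  by apply: leq_ltn_trans le_lcm_pq _; rewrite ltn_neqAle lt_pq leq_mul.
have [-> ->] : p = m /\ q = n by nia.
have lcm_gt0 : 0 < lcmn m n by rewrite lcmn_gt0 (leq_trans p_gt0) ?(leq_trans q_gt0).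
by rewrite -muln_lcm_gcd -[X in X < _]muln1 ltn_mul2l lcm_gt0 gcd_gt1.
Qed.

Section TensorComplete.

Variables A B : finType.

Definition tensor_complete (u v : A * B) : bool := (u.1 != v.1) && (u.2 != v.2).

Definition non_nbhd (u : A * B) : {set A * B} := [set w | ~~ tensor_complete u w].

Lemma card_non_nbhdI_row (u v : A * B) :
  u.1 = v.1 -> u != v -> #|non_nbhd u :&: non_nbhd v| = #|B|.
Proof.
case: u v => [a b] [_ b'] /= <- neq_uv.
have neq_b : b != b' by apply: contra neq_uv => /eqP <-.
suff -> : non_nbhd (a, b) :&: non_nbhd (a, b') = setX [set a] [set: B].
  by rewrite cardsX cards1 cardsT mul1n.
apply/setP => -[x y]; rewrite !inE /tensor_complete /= !negb_and !negbK andbT.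
rewrite -orb_andr [a == x]eq_sym; have [<-|_] := eqVneq b y; last by rewrite orbF.
by rewrite [b' == b]eq_sym (negbTE neq_b) orbF.
Qed.

Lemma card_non_nbhdI_col (u v : A * B) :
  u.2 = v.2 -> u != v -> #|non_nbhd u :&: non_nbhd v| = #|A|.
Proof.
case: u v => [a b] [a' _] /= <- neq_uv.
have neq_a : a != a' by apply: contra neq_uv => /eqP <-.
suff -> : non_nbhd (a, b) :&: non_nbhd (a', b) = setX [set: A] [set b].
  by rewrite cardsX cards1 cardsT muln1.
apply/setP => -[x y]; rewrite !inE /tensor_complete /= !negb_and !negbK.
rewrite -orb_andl [b == y]eq_sym; have [<-|_] := eqVneq a x; last by [].
by rewrite [a' == a]eq_sym (negbTE neq_a).
Qed.

Section Automorphism.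

Variable phi : A * B -> A * B.
Hypothesis phi_inj : injective phi.
Hypothesis phi_adj : forall u v, tensor_complete (phi u) (phi v) = tensor_complete u v.
Hypothesis neq_card : #|A| != #|B|.

Lemma card_non_nbhdI_aut u v :
  #|non_nbhd (phi u) :&: non_nbhd (phi v)| = #|non_nbhd u :&: non_nbhd v|.
Proof.
rewrite -(card_preimset _ phi_inj).
by apply: eq_card => w; rewrite !inE !phi_adj.
Qed.

Lemma aut_row u v : u.1 = v.1 -> (phi u).1 = (phi v).1.
Proof.
move=> eq_uv1; have [-> //|neq_uv] := eqVneq u v.
have neq_phi : phi u != phi v by rewrite (inj_eq phi_inj).
have : ~~ tensor_complete (phi u) (phi v).
  by rewrite phi_adj /tensor_complete eq_uv1 eqxx.
rewrite negb_and !negbK => /orP[/eqP // | /eqP eq_phi2].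
have := card_non_nbhdI_aut u v.
rewrite (card_non_nbhdI_col eq_phi2 neq_phi) (card_non_nbhdI_row eq_uv1 neq_uv).
by move/eqP; rewrite (negbTE neq_card).
Qed.

Lemma aut_col u v : u.2 = v.2 -> (phi u).2 = (phi v).2.
Proof.
move=> eq_uv2; have [-> //|neq_uv] := eqVneq u v.
have neq_phi : phi u != phi v by rewrite (inj_eq phi_inj).
have : ~~ tensor_complete (phi u) (phi v).
  by rewrite phi_adj /tensor_complete eq_uv2 eqxx andbF.
rewrite negb_and !negbK => /orP[/eqP eq_phi1 | /eqP //].
have := card_non_nbhdI_aut u v.
rewrite (card_non_nbhdI_row eq_phi1 neq_phi) (card_non_nbhdI_col eq_uv2 neq_uv).
by move/eqP; rewrite eq_sym (negbTE neq_card).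
Qed.

Lemma aut_pairE u a b : phi u = ((phi (u.1, b)).1, (phi (a, u.2)).2).
Proof. by rewrite [LHS]surjective_pairing (@aut_row u (u.1, b)) ?(@aut_col u (a, u.2)). Qed.

Lemma aut_orbit_lt u :
  1 < gcdn #|A| #|B| -> exists2 k, 0 < k < #|A| * #|B| & iter k phi u = u.
Proof.
move=> gcd_gt1.
pose al x := (phi (x, u.2)).1; pose be y := (phi (u.1, y)).2.
have phiE w : phi w = (al w.1, be w.2) by exact: aut_pairE.
have iterE k w : iter k phi w = (iter k al w.1, iter k be w.2).
  by elim: k w => [[] //|k IHk] w; rewrite iterS IHk phiE.
have al_inj : injective al.
  move=> x x' eq_al; apply: (congr1 fst (@phi_inj (x, u.2) (x', u.2) _)).
  by rewrite !phiE /= eq_al.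
have be_inj : injective be.
  move=> y y' eq_be; apply: (congr1 snd (@phi_inj (u.1, y) (u.1, y') _)).
  by rewrite !phiE /= eq_be.
exists (lcmn (order al u.1) (order be u.2)).
  rewrite lcmn_gt0 !order_gt0 lcmn_lt_muln ?order_gt0 ?max_card //.
by rewrite iterE !iter_order_dvdn ?dvdn_lcml ?dvdn_lcmr // -surjective_pairing.
Qed.

End Automorphism.

End TensorComplete.

Lemma val_iter_ordS N (i : 'I_N) k : val (iter k (@ordS N) i) = (i + k) %% N.
Proof.
elim: k => [|k IHk] /=; first by rewrite addn0 modn_small.
by rewrite IHk -[(_ %% N).+1]addn1 modnDml addn1 addnS.
Qed.

Lemma modz_ordSB N (i j : 'I_N) (t : int) :
  ((((ordS i)%:Z - (ordS j)%:Z) + t) %% N%:Z)%Z = (((i%:Z - j%:Z) + t) %% N%:Z)%Z.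
Proof.
have ordSB : ((ordS i)%:Z - (ordS j)%:Z = i%:Z - j%:Z %[mod N])%Z.
  rewrite /= -!modz_nat modzDml -modzDmr modzNm modzDmr.
  by rewrite !intS opprD addrACA subrr add0r.
by rewrite -modzDml ordSB modzDml.
Qed.

Lemma circulant_adj_ordS N (S : int -> Prop) (i j : 'I_N) :
  circulant_adj S (ordS i) (ordS j) <-> circulant_adj S i j.
Proof.
by split=> -[s [Ss adj_s]]; exists s; split; rewrite // ?modz_ordSB in adj_s *.
Qed.

Lemma tensor_adj_completeE m n (u v : 'I_m * 'I_n) :
  tensor_adj (@complete_adj m) (@complete_adj n) u v <-> tensor_complete u v.
Proof. by split=> [[/eqP neq1 /eqP neq2] | /andP[/eqP neq1 /eqP neq2]]; [apply/andP|]. Qed.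

Theorem lemma3 (m n : nat) :
  0 < m -> 0 < n -> m <> n -> 1 < gcdn m n ->
  ~ is_circulant (tensor_adj (@complete_adj m) (@complete_adj n)).
Proof.
move=> m_gt0 n_gt0 neq_mn gcd_gt1 [N [S [f [[g fK gK] f_adj]]]].
have N_eq : N = m * n.
  by have := bij_eq_card (Bijective fK gK); rewrite card_prod !card_ord.
have f_adjE i j : circulant_adj S i j <-> tensor_complete (f i) (f j).
  by rewrite -tensor_adj_completeE.
pose phi u := f (ordS (g u)).
have phi_inj : injective phi by move=> u v /(can_inj fK)/ordS_inj/(can_inj gK).
have phi_adj u v : tensor_complete (phi u) (phi v) = tensor_complete u v.
  rewrite -[in RHS](gK u) -[in RHS](gK v).
  by apply/idP/idP => /f_adjE adj; apply/f_adjE; apply/circulant_adj_ordS.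
have iter_phi k i : iter k phi (f i) = f (iter k (@ordS N) i).
  by elim: k => [//|k IHk]; rewrite iterS IHk /phi fK.
have N_gt0 : 0 < N by rewrite N_eq muln_gt0 m_gt0.
have neq_card : #|'I_m| != #|'I_n| by rewrite !card_ord; apply/eqP.
have gcd_card_gt1 : 1 < gcdn #|'I_m| #|'I_n| by rewrite !card_ord.
have [k /andP[k_gt0 lt_kN]] :=
  aut_orbit_lt phi_inj phi_adj neq_card (f (Ordinal N_gt0)) gcd_card_gt1.
rewrite !card_ord -N_eq in lt_kN.
rewrite iter_phi => /(can_inj fK)/(congr1 val).
by rewrite val_iter_ordS add0n modn_small // => k_eq0; rewrite k_eq0 in k_gt0.
Qed.
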